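(* Let $n,r\ge1$, let $D=\{(\mathbf s_1,\mathbf t_1),\dots,(\mathbf s_r,\mathbf t_r)\}\subset\mathbb F_2^n\times\mathbb F_2^n$, fix $i\in\{1,\dots,n\}$, and let $f_i$, $p$, $I=\langle p\rangle$, $W_S$ and $$\Phi:\overline{\mathbb F}_2[\{c_S:S\subseteq[n]\}]\to\overline{\mathbb F}_2[\{b_H:H\subseteq[n]\}],\quad c_S\mapsto W_S,$$ be as follows: $f_i=\sum_{j=1}^r t_{j,i}\prod_{e=1}^n(1-(x_e-s_{j,e}))$, $p=\prod_{j=1}^r\bigl(1-\prod_{e=1}^n(1-(x_e-s_{j,e}))\bigr)$, and $W_S$ is the coefficient of $\prod_{l\in S}x_l$ in the reduction modulo $\langle x_e^2-x_e\rangle$ of $f_i+\bigl(\sum_{H\subseteq[n]}b_H\prod_{l\in H}x_l\bigr)p$. Let $\mathbb I(V^{ncf})=\bigcap_\sigma I_\sigma$ (intersection over all permutations $\sigma$ of $[n]$), where $$I_\sigma=\Bigl\langle c_{[n]}-1,\; c_S-c_{[r_S^\sigma]}\prod_{\sigma(k)\in[r_S^\sigma]\setminus S}c_{[n]\setminus\{\sigma(k)\}}\;:\;S\subsetneq[n]\Bigr\rangle\subseteq\overline{\mathbb F}_2[\{c_S:S\subseteq[n]\}].$$ Then the ideal of all nested canalyzing functions that fit the data set $D$ is $\mathbb I(V^{ncf})+\ker(\Phi)$; that is, the $\mathbb F_2$-rational points of $\mathbb V(\mathbb I(V^{ncf})+\ker\Phi)$, identified with Boolean polynomials via $(c_S)\leftrightarrow\sum_S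 c_S\prod_{l\in S}x_l$, are exactly the nested canalyzing functions $h$ on $n$ variables with $h(\mathbf s_j)=t_{j,i}$ for $j=1,\dots,r$.
   Context: Boolean functions $\mathbb F_2^n\to\mathbb F_2$ are identified with elements $\sum_{S\subseteq[n]}c_S\prod_{l\in S}x_l$ of $\mathbb F_2[x_1,\dots,x_n]/\langle x_e^2-x_e\rangle$ and with coefficient vectors $(c_S)\in\mathbb F_2^{2^n}$; $[n]=\{1,\dots,n\}$. A function ''on $n$ variables'' depends on each variable. A Boolean function $h$ on $n$ variables is nested canalyzing if there exist a permutation $\sigma$ of $[n]$ and $a_1,\dots,a_n,b_1,\dots,b_n\in\mathbb F_2$ such that $h(x)=b_k$ whenever $x_{\sigma(1)}\ne a_1,\dots,x_{\sigma(k-1)}\ne a_{k-1}$ and $x_{\sigma(k)}=a_k$ ($k=1,\dots,n$), and $h(x)=\overline{b_n}=1+b_n$ when $x_{\sigma(k)}\ne a_k$ for all $k$. For a permutation $\sigma$, the order $<_\sigma$ on $[n]$ is $\sigma(k)<_\sigma\sigma(l)\iff k<l$; for nonempty $S\subseteq[n]$, $r_S^\sigma$ denotes the index $m$ such that $\sigma(m)$ is the $<_\sigma$-largest element of $S$, and $[r_S^\sigma]=\{\sigma(1),\dots,\sigma(r_S^\sigma)\}$ (for $S=\emptyset$ the completion is empty). $V^{ncf}\subseteq\mathbb F_2^{2^n}$ denotes the set of coefficient vectors of all nested canalyzing functions, $V^{ncf}=\bigcup_\sigma V_\sigma^{ncf}$ with $V_\sigma^{ncf}$ the vectors with $c_{[n]}=1$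 and $c_S=c_{[r_S^\sigma]}\prod_{\sigma(k)\in[r_S^\sigma]\setminus S}c_{[n]\setminus\{\sigma(k)\}}$; its ideal is $\bigcap_\sigma I_\sigma$. $\overline{\mathbb F}_2$ is the algebraic closure of $\mathbb F_2$. *)

From HB Require Import structures.
From mathcomp Require Import all_boot all_order all_algebra all_fingroup all_field.
From mathcomp Require Import mpoly.
Set Implicit Arguments. Unset Strict Implicit. Unset Printing Implicit Defensive.
Import GRing.Theory.
Local Open Scope ring_scope.

Definition F2bar : countClosedFieldType :=
  projT1 (countable_algebraic_closure 'F_2).

Definition bpoly_eval (n : nat) (c : {ffun {set 'I_n} -> bool}) (x : 'I_n -> bool) : bool :=
  \big[addb/false]_(S : {set 'I_n}) (c S && [forall l in S, x l]).

Definition flip (n : nat) (x : 'I_n -> bool) (l : 'I_n) : 'I_n -> bool :=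
  fun m => if m == l then ~~ x l else x m.

Definition on_all_vars (n : nat) (h : ('I_n -> bool) -> bool) : Prop :=
  forall l : 'I_n, exists x : 'I_n -> bool, h x != h (flip x l).

Definition nested_canalyzing (n : nat) (h : ('I_n -> bool) -> bool) : Prop :=
  on_all_vars h /\
  exists (sigma : {perm 'I_n}) (a b : 'I_n -> bool),
    forall x : 'I_n -> bool,
      (forall k : 'I_n,
          (forall k' : 'I_n, (k' < k)%N -> x (sigma k') != a k') ->
          x (sigma k) = a k -> h x = b k) /\
      ((forall k : 'I_n, x (sigma k) != a k) ->
          forall k : 'I_n, val k = n.-1 -> h x = ~~ b k).

Definition nsub (n : nat) : nat := #|{set 'I_n}|.

(* ring F2bar[{c_S}] (also used for F2bar[{b_H}]) *)
Definition cring (n : nat) := {mpoly F2bar[nsub n]}.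

Definition var (n : nat) (S : {set 'I_n}) : cring n := 'X_(enum_rank S).

(* [r_S^sigma] = {sigma(1),...,sigma(r_S^sigma)}; empty for S empty *)
Definition completion (n : nat) (sigma : {perm 'I_n}) (S : {set 'I_n}) : {set 'I_n} :=
  if S == set0 then set0
  else [set sigma k | k : 'I_n & (k <= \max_(l in S) val ((sigma^-1)%g l))%N].

Definition Isigma_gen (n : nat) (sigma : {perm 'I_n}) (S : {set 'I_n}) : cring n :=
  var S - var (completion sigma S) *
    \prod_(k : 'I_n | sigma k \in completion sigma S :\: S) var (setT :\ sigma k).

Definition in_Isigma (n : nat) (sigma : {perm 'I_n}) (q : cring n) : Prop :=
  exists coef : option {set 'I_n} -> cring n,
    q = coef None * (var setT - 1) +
        \sum_(S : {set 'I_n} | S != setT) coef (Some S) * Isigma_gen sigma S.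

Definition in_IVncf (n : nat) (q : cring n) : Prop :=
  forall sigma : {perm 'I_n}, in_Isigma sigma q.

(* polynomials in x_1..x_n with coefficients in F2bar[{b_H}] *)
Definition xring (n : nat) := {mpoly (cring n)[n]}.

Definition bit (R : nzRingType) (b : bool) : R := (b : nat)%:R.

Definition delta (n : nat) (s : 'I_n -> bool) : xring n :=
  \prod_(e < n) (1 - ('X_e - bit _ (s e))).

Definition f_data (n r : nat) (s : 'I_r -> 'I_n -> bool) (t : 'I_r -> 'I_n -> bool)
  (i : 'I_n) : xring n :=
  \sum_(j < r) bit _ (t j i) * delta (s j).

Definition p_data (n r : nat) (s : 'I_r -> 'I_n -> bool) : xring n :=
  \prod_(j < r) (1 - delta (s j)).

Definition generic_b (n : nat) : xring n :=
  \sum_(H : {set 'I_n}) (var H)%:MP * \prod_(l in H) 'X_l.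

(* coefficient of prod_{l in S} x_l in the reduction of P modulo <x_e^2 - x_e>:
   the reduction sends each monomial x^m to x^{supp m}. *)
Definition red_coef (n : nat) (S : {set 'I_n}) (P : xring n) : cring n :=
  \sum_(m <- msupp P | [set l | (m l != 0)%N] == S) P@_m.

Definition W_poly (n r : nat) (s t : 'I_r -> 'I_n -> bool) (i : 'I_n)
  (S : {set 'I_n}) : cring n :=
  red_coef S (f_data s t i + generic_b n * p_data s).

Definition Phi (n r : nat) (s t : 'I_r -> 'I_n -> bool) (i : 'I_n) (q : cring n)
  : cring n :=
  mmap (@mpolyC _ F2bar) (fun k : 'I_(nsub n) => W_poly s t i (enum_val k)) q.

Definition in_J (n r : nat) (s t : 'I_r -> 'I_n -> bool) (i : 'I_n) (q : cring n)
  : Prop :=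
  exists q1 q2 : cring n, q = q1 + q2 /\ in_IVncf q1 /\ Phi s t i q2 = 0.

(* F_2-rational point of the variety of an ideal, given by the coefficient
   vector c (embedded into F2bar via 0,1) *)
Definition F2_point_in_V (n : nat) (J : cring n -> Prop) (c : {ffun {set 'I_n} -> bool})
  : Prop :=
  forall q : cring n, J q -> q.@[fun k : 'I_(nsub n) => bit F2bar (c (enum_val k))] = 0.

From HB Require Import structures.
From mathcomp Require Import all_boot all_order all_algebra all_fingroup all_field.
From mathcomp Require Import mpoly zify.
From Stdlib Require Import FunctionalExtensionality.
Set Implicit Arguments. Unset Strict Implicit. Unset Printing Implicit Defensive.
Import GRing.Theory.
Local Open Scope ring_scope.

(* Everything is evaluated at 0/1 points, where characteristic 2 turns xor and
   conjunction into + and *, and a coefficient vector c and its Boolean function h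
   determine each other by Moebius inversion: h(T) = \sum_(S \subset T) c_S.
   For a fixed order sigma, the 0/1 solutions of the equations of I_sigma are exactly
   the coefficient vectors of b0 + \sum_k beta_k \prod_(j <= k) (x_(sigma j) + a_j)
   with beta_(n-1) = 1, i.e. of the functions canalyzing in the order sigma
   (beta_k = b_k + b_(k+1) telescopes to the canalyzed value); moreover c_[n] is the
   parity of h, so c_[n] = 1 forces h to depend on every variable.
   A 0/1 point lies on V(\bigcap I_sigma) iff it lies on some V(I_sigma), since a
   product of one nonvanishing element of each I_sigma lies in the intersection.
   Finally, putting also b_H := c_H, the interpolant f_i + b p agrees with h at every
   point when h fits the data, so W_S(c) = c_S and the point kills ker Phi; conversely
   \sum_(S \subset s_j) c_S - t_(j,i) lies in ker Phi. *)

Lemma F2bar_pchar2 : 2 \in [pchar F2bar].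
Proof.
rewrite /F2bar; case: (countable_algebraic_closure 'F_2) => K [f _] /=.
by apply: (rmorph_pchar f); apply: pchar_Fp.
Qed.

Section Bits.
Variables (R : comNzRingType) (R2 : 2 \in [pchar R]).

Lemma bitT : bit R true = 1. Proof. by []. Qed.
Lemma bitF : bit R false = 0. Proof. by []. Qed.

Lemma bit_inj : injective (bit R).
Proof. by case; case=> // /eqP; rewrite ?bitT ?bitF ?oner_eq0 // eq_sym oner_eq0. Qed.

Lemma bit_andb a b : bit R (a && b) = bit R a * bit R b.
Proof. by case: a; case: b; rewrite /= ?bitT ?bitF ?mulr0 ?mul0r ?mulr1. Qed.

Lemma bit_addb a b : bit R (a (+) b) = bit R a + bit R b.
Proof. by case: a; case: b; rewrite /= ?bitT ?bitF ?addr0 ?add0r ?addrr_pchar2. Qed.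

Lemma bit_negb a : bit R (~~ a) = 1 + bit R a.
Proof. by case: a; rewrite /= ?bitT ?bitF ?addr0 ?addrr_pchar2. Qed.

Lemma bit_neqb a b : bit R (a != b) = bit R a + bit R b.
Proof. by rewrite -bit_addb; case: a; case: b. Qed.

Lemma bit_eqb a b : bit R (a == b) = 1 - (bit R a - bit R b).
Proof.
by case: a; case: b; rewrite /= ?subrr ?subr0 ?sub0r ?oppr_pchar2 ?addrr_pchar2 ?addr0.
Qed.

Lemma bit_sum (I : finType) (P : pred I) (F : I -> bool) :
  bit R (\big[addb/false]_(i | P i) F i) = \sum_(i | P i) bit R (F i).
Proof. by apply: (big_morph (bit R)) => [a b|]; rewrite ?bit_addb. Qed.

Lemma bit_prod (I : finType) (P : pred I) (F : I -> bool) :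
  \prod_(i | P i) bit R (F i) = bit R [forall (i | P i), F i].
Proof.
rewrite -big_andE; apply/esym; apply: (big_morph (bit R)) => [a b|];
  by rewrite ?bit_andb.
Qed.

End Bits.

Lemma bit_expr (R : nzRingType) (b : bool) k : bit R b ^+ k = bit R ((k != 0)%N ==> b).
Proof. by case: k => [|k]; [rewrite expr0 | case: b; rewrite /= ?expr1n ?expr0n]. Qed.

Section SubsetSums.
Variable n : nat.
Implicit Types (S T : {set 'I_n}).

Lemma eq_of_subset_sums (V : zmodType) (a b : {set 'I_n} -> V) :
  (forall T, \sum_(S : {set 'I_n} | S \subset T) a S =
             \sum_(S : {set 'I_n} | S \subset T) b S) ->
  a =1 b.
Proof.
move=> eq_sums S; apply/eqP; rewrite -subr_eq0; apply/eqP.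
have sum_diff0 T : \sum_(S : {set 'I_n} | S \subset T) (a S - b S) = 0.
  by rewrite sumrB eq_sums subrr.
elim: {S}_.+1 {-2}S (ltnSn #|S|) => // k IH S ltSk.
have := sum_diff0 S; rewrite (bigD1 S) //= big1 ?addr0 // => S' /andP[sS' nS'].
rewrite ltnS in ltSk; apply: IH; apply: leq_trans ltSk; apply: proper_card.
by rewrite properEneq nS' sS'.
Qed.

Definition toggle (l : 'I_n) T := if l \in T then T :\ l else l |: T.

Lemma toggleK l : involutive (toggle l).
Proof.
move=> T; rewrite /toggle; case lT: (l \in T); rewrite /= ?setD11 ?setU11 /=.
  by rewrite setD1K.
by rewrite setU1K // lT.
Qed.

Lemma mem_toggle l T : (l \in toggle l T) = (l \notin T).
Proof. by rewrite /toggle; case: ifP => lT; rewrite ?setD11 ?setU11. Qed.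

Lemma mem_toggle_neq l T m : m != l -> (m \in toggle l T) = (m \in T).
Proof. by move=> ml; rewrite /toggle; case: ifP; rewrite ?in_setD1 ?in_setU1 (negbTE ml). Qed.

Variables (R : comNzRingType) (R2 : 2 \in [pchar R]).

(* Toggling l pairs off the summands, and in characteristic 2 each pair cancels. *)
Lemma sum_toggle_invariant l (P : pred {set 'I_n}) (F : {set 'I_n} -> R) :
  (forall T, P (toggle l T) = P T) -> (forall T, F (toggle l T) = F T) ->
  \sum_(T : {set 'I_n} | P T) F T = 0.
Proof.
move=> PtogE FtogE; rewrite (bigID (fun T => l \in T)) /=.
rewrite [X in _ + X](reindex_inj (can_inj (toggleK l))) /=.
rewrite [X in _ + X](eq_bigl (fun T => P T && (l \in T))); last first.
  by move=> T; rewrite PtogE mem_toggle negbK.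
by rewrite [X in _ + X](eq_bigr F) ?addrr_pchar2.
Qed.

Lemma sum_supsets_one S : \sum_(T : {set 'I_n} | S \subset T) (1 : R) = (S == setT)%:R.
Proof.
have [->|nST] := eqVneq S setT.
  by rewrite (big_pred1 setT) // => T; rewrite subTset.
move: nST; rewrite -subTset => /subsetPn [l _ lS].
apply: (@sum_toggle_invariant l (fun T => S \subset T) (fun=> 1)) => // T.
apply/subsetP/subsetP => sST m mS; have ml : m != l by apply: contraNneq lS => <-.
  by rewrite -(mem_toggle_neq T ml) sST.
by rewrite (mem_toggle_neq T ml) sST.
Qed.

End SubsetSums.

Section BoolPoly.
Variables (n : nat) (R : comNzRingType) (R2 : 2 \in [pchar R]).
Implicit Types (c : {ffun {set 'I_n} -> bool}) (T : {set 'I_n}).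

Lemma bpoly_eval_ext c (x y : 'I_n -> bool) : x =1 y -> bpoly_eval c x = bpoly_eval c y.
Proof. by move=> exy; apply: eq_bigr => S _; congr andb; apply: eq_forallb => l; rewrite exy. Qed.

Lemma bit_bpoly_eval c (x : 'I_n -> bool) :
  bit R (bpoly_eval c x) = \sum_(S : {set 'I_n} | S \subset [set l | x l]) bit R (c S).
Proof.
rewrite /bpoly_eval (bit_sum R2) [RHS]big_mkcond /=; apply: eq_bigr => S _.
have -> : [forall l in S, x l] = (S \subset [set l | x l]).
  by apply/forall_inP/subsetP => xS l /xS; rewrite inE.
by rewrite bit_andb; case: ifP; rewrite ?bitT ?bitF ?mulr1 ?mulr0.
Qed.

Lemma bit_bpoly_eval_set c T :
  bit R (bpoly_eval c (fun l => l \in T)) = \sum_(S : {set 'I_n} | S \subset T) bit R (c S).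
Proof. by rewrite bit_bpoly_eval (_ : [set l | l \in T] = T) //; apply/setP => l; rewrite inE. Qed.

Lemma sum_bit_bpoly_eval c :
  \sum_(T : {set 'I_n}) bit R (bpoly_eval c (fun l => l \in T)) = bit R (c setT).
Proof.
have sum_supsets (S : {set 'I_n}) (b : R) :
    \sum_(T : {set 'I_n}) (if S \subset T then b else 0) = b * (S == setT)%:R.
  rewrite -sum_supsets_one // mulr_sumr [RHS]big_mkcond.
  by apply: eq_bigr => T _; case: ifP; rewrite ?mulr1 ?mulr0.
under eq_bigr do rewrite bit_bpoly_eval_set big_mkcond.
rewrite exchange_big /= (bigD1 setT) //= [X in _ + X]big1 => [|S nST].
  by rewrite addr0 sum_supsets eqxx mulr1.
by rewrite sum_supsets (negbTE nST) mulr0.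
Qed.

Lemma flip_toggle (x : 'I_n -> bool) l T : x =1 (fun m => m \in T) ->
  flip x l =1 (fun m => m \in toggle l T).
Proof.
move=> xT m; rewrite /flip; have [->|ml] := eqVneq m l; first by rewrite mem_toggle xT.
by rewrite mem_toggle_neq // xT.
Qed.

Lemma on_all_vars_bpoly c : c setT -> on_all_vars (bpoly_eval c).
Proof.
move=> cT l.
have [/existsP [T flipT]|] :=
  boolP [exists T : {set 'I_n}, bpoly_eval c (fun m => m \in T) !=
                                bpoly_eval c (flip (fun m => m \in T) l)].
  by exists (fun m => m \in T).
rewrite negb_exists => /forallP flip_inv; exfalso.
have := sum_bit_bpoly_eval c; rewrite cT bitT.
rewrite (@sum_toggle_invariant _ _ R2 l predT
                                (fun T => bit R (bpoly_eval c (fun m => m \in T)))) //.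
  by move/eqP; rewrite eq_sym oner_eq0.
move=> T; congr (bit R _); have := flip_inv T; rewrite negbK => /eqP ->.
by apply: bpoly_eval_ext => m; symmetry; apply: flip_toggle.
Qed.

End BoolPoly.

Definition canalyzing_with (n : nat) (sigma : {perm 'I_n}) (a b : 'I_n -> bool)
    (h : ('I_n -> bool) -> bool) :=
  forall x : 'I_n -> bool,
      (forall k : 'I_n,
          (forall k' : 'I_n, (k' < k)%N -> x (sigma k') != a k') ->
          x (sigma k) = a k -> h x = b k) /\
      ((forall k : 'I_n, x (sigma k) != a k) ->
          forall k : 'I_n, val k = n.-1 -> h x = ~~ b k).

Definition canalyzing_wrt (n : nat) (sigma : {perm 'I_n}) (h : ('I_n -> bool) -> bool) :=
  exists a b : 'I_n -> bool, canalyzing_with sigma a b h.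

Definition Vsigma_rhs (n : nat) (sigma : {perm 'I_n}) (c : {ffun {set 'I_n} -> bool})
    (S : {set 'I_n}) : bool :=
  c (completion sigma S) &&
  [forall (k | sigma k \in completion sigma S :\: S), c (setT :\ sigma k)].

Definition in_Vsigma (n : nat) (sigma : {perm 'I_n}) (c : {ffun {set 'I_n} -> bool}) :=
  c setT && [forall S, (S != setT) ==> (c S == Vsigma_rhs sigma c S)].

Section NestedCanalyzing.
Variables (R : comNzRingType) (R2 : 2 \in [pchar R]) (n' : nat) (sigma : {perm 'I_n'.+1}).
Local Notation n := n'.+1.
Implicit Types (S T : {set 'I_n}) (c : {ffun {set 'I_n} -> bool}).

Definition pos (l : 'I_n) : nat := (sigma^-1)%g l.
Definition init_seg (m : nat) : {set 'I_n} := [set l | (pos l <= m)%N].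
Definition last_pos S : nat := \max_(l in S) pos l.

Lemma pos_perm (k : 'I_n) : pos (sigma k) = k.
Proof. by rewrite /pos permK. Qed.

Lemma mem_init_seg (k : 'I_n) m : (sigma k \in init_seg m) = (k <= m)%N.
Proof. by rewrite inE pos_perm. Qed.

Lemma pos_le_last S l : l \in S -> (pos l <= last_pos S)%N.
Proof. exact: leq_bigmax_cond. Qed.

Lemma last_pos_attained S : S != set0 -> exists2 l, l \in S & pos l = last_pos S.
Proof. by rewrite -card_gt0 => /(eq_bigmax_cond pos) [l lS e]; exists l. Qed.

Lemma last_pos_bound S : (last_pos S <= n')%N.
Proof. by apply/bigmax_leqP => l _; rewrite -ltnS ltn_ord. Qed.

Lemma sub_init_seg S m : (S \subset init_seg m) = (last_pos S <= m)%N.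
Proof.
apply/subsetP/bigmax_leqP => [Sm l /Sm|Sm l lS]; first by rewrite inE.
by rewrite inE Sm.
Qed.

Lemma completionE S : S != set0 -> completion sigma S = init_seg (last_pos S).
Proof.
move=> nS; rewrite /completion (negbTE nS); apply/setP => l; rewrite inE.
apply/imsetP/idP => [[k + ->]|lS]; first by rewrite inE pos_perm.
by exists ((sigma^-1)%g l); rewrite ?inE ?permKV.
Qed.

Lemma last_pos_init_seg m : (m <= n')%N -> last_pos (init_seg m) = m.
Proof.
move=> le_m; apply/eqP; rewrite eqn_leq; apply/andP; split.
  by apply/bigmax_leqP => l; rewrite inE.
have := @pos_le_last (init_seg m) (sigma (inord m)).
by rewrite mem_init_seg pos_perm inordK // leqnn; apply.
Qed.

Lemma init_seg_neq0 m : init_seg m != set0.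
Proof. by apply/set0Pn; exists (sigma ord0); rewrite mem_init_seg. Qed.

Lemma init_seg_last : init_seg n' = setT.
Proof. by apply/setP => l; rewrite !inE -ltnS ltn_ord. Qed.

(* The last element of S lies in S, so it never occurs in [completion sigma S :\: S]. *)
Lemma completion_diff_lt S (k : 'I_n) :
  S != set0 -> sigma k \in completion sigma S :\: S -> (k < n')%N.
Proof.
move=> nS; rewrite completionE // !inE pos_perm => /andP[kS le_k].
have [l lS posl] := last_pos_attained nS.
rewrite ltn_neqAle -ltnS ltn_ord andbT; apply: contraNneq kS => ek.
suff -> : sigma k = l by [].
rewrite -(permKV sigma l); congr (sigma _); apply/val_inj => /=.
by have := last_pos_bound S; rewrite -/(pos l) posl ek; lia.
Qed.

Lemma last_pos_setD1 (k : 'I_n) : (k < n')%N -> last_pos (setT :\ sigma k) = n'.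
Proof.
move=> lt_k; apply/eqP; rewrite eqn_leq last_pos_bound /=.
have := @pos_le_last (setT :\ sigma k) (sigma ord_max); rewrite pos_perm; apply.
by rewrite !inE andbT (inj_eq perm_inj) -val_eqE /=; lia.
Qed.

Definition tail_sum (beta A : nat -> R) (m : nat) : R :=
  \sum_(k : 'I_n | (m <= k)%N) beta k * \prod_(j : 'I_n | (m < j <= k)%N) A j.

(* The coefficient vector of b0 + \sum_k beta_k \prod_(j <= k) (x_(sigma j) + A_j). *)
Definition ncf_coef (b0 : R) (beta A : nat -> R) S : R :=
  bit R (S == set0) * b0 +
  \sum_(k : 'I_n) beta k * (bit R (S \subset init_seg k) *
      \prod_(j : 'I_n | (j <= k)%N && (sigma j \notin S)) A j).

Section Coefficients.
Variables (b0 : R) (beta A : nat -> R).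

Lemma ncf_coef_neq0 S : S != set0 ->
  ncf_coef b0 beta A S = tail_sum beta A (last_pos S) *
     \prod_(j : 'I_n | (j <= last_pos S)%N && (sigma j \notin S)) A j.
Proof.
move=> nS; rewrite /ncf_coef (negbTE nS) bitF mul0r add0r /tail_sum mulr_suml.
rewrite [RHS]big_mkcond /=; apply: eq_bigr => k _.
rewrite sub_init_seg; case: leqP => le_k; rewrite ?bitT ?bitF ?mul0r ?mulr0 // mul1r -mulrA.
congr (_ * _); rewrite (bigID (fun j : 'I_n => (j <= last_pos S)%N)) /= mulrC.
congr (_ * _); apply: eq_bigl => j; case: (ltnP (last_pos S) j) => hj;
  case: (boolP (sigma j \in S)) => jS /=;
  try (by have := pos_le_last jS; rewrite pos_perm leqNgt hj);
  rewrite ?(leq_trans hj le_k) ?andbT ?andbF ?hj //= ?andbT ?andbF //.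
Qed.

Lemma tail_sum_last : tail_sum beta A n' = beta n'.
Proof.
rewrite /tail_sum (big_pred1 ord_max) => [|k]; last first.
  by rewrite /= -val_eqE /=; have := ltn_ord k; lia.
by rewrite big_pred0 ?mulr1 // => j; have := ltn_ord j; rewrite /=; lia.
Qed.

Lemma tail_sum_rec m : (m < n')%N ->
  tail_sum beta A m = beta m + A m.+1 * tail_sum beta A m.+1.
Proof.
move=> lt_m; rewrite /tail_sum (bigD1 (inord m)) /=; last by rewrite inordK //; lia.
rewrite inordK; last by lia.
rewrite big_pred0 ?mulr1 => [|j]; last by lia.
congr (_ + _); rewrite mulr_sumr.
rewrite (eq_bigl (fun k : 'I_n => (m.+1 <= k)%N)) => [|k]; last first.
  by rewrite -val_eqE /= inordK; lia.
apply: eq_bigr => k le_k; rewrite (bigD1 (inord m.+1)) /=; last by rewrite inordK; lia.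
rewrite inordK; last by lia.
rewrite mulrCA; congr (_ * (_ * _)).
by apply: eq_bigl => j; rewrite -val_eqE /= inordK; lia.
Qed.

Lemma ncf_coef_init_seg m : (m <= n')%N -> ncf_coef b0 beta A (init_seg m) = tail_sum beta A m.
Proof.
move=> le_m; rewrite ncf_coef_neq0 ?init_seg_neq0 // last_pos_init_seg //.
by rewrite big_pred0 ?mulr1 // => j; rewrite mem_init_seg; case: (j <= m)%N.
Qed.

Lemma ncf_coef_setD1 (k : 'I_n) : (k < n')%N ->
  ncf_coef b0 beta A (setT :\ sigma k) = beta n' * A k.
Proof.
move=> lt_k; rewrite ncf_coef_neq0; last first.
  apply/set0Pn; exists (sigma ord_max).
  by rewrite !inE andbT (inj_eq perm_inj) -val_eqE /=; lia.
rewrite last_pos_setD1 // tail_sum_last (big_pred1 k) // => j.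
rewrite /= !inE andbT negbK (inj_eq perm_inj); have := ltn_ord j; case: (j == k); lia.
Qed.

Lemma ncf_coef_setT : beta n' = 1 -> ncf_coef b0 beta A setT = 1.
Proof. by move=> beta_last; rewrite -init_seg_last ncf_coef_init_seg // tail_sum_last. Qed.

Lemma ncf_coef_completion S : beta n' = 1 ->
  ncf_coef b0 beta A S = ncf_coef b0 beta A (completion sigma S) *
    \prod_(k : 'I_n | sigma k \in completion sigma S :\: S) ncf_coef b0 beta A (setT :\ sigma k).
Proof.
move=> beta_last; have [->|nS] := eqVneq S set0.
  by rewrite /completion eqxx big_pred0 ?mulr1 // => k; rewrite inE in_set0 andbF.
rewrite ncf_coef_neq0 // [in RHS]completionE // ncf_coef_init_seg ?last_pos_bound //.
congr (_ * _); apply: eq_big => [k|k kS].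
  by rewrite !inE pos_perm andbC.
have lt_k : (k < n')%N.
  by apply: (completion_diff_lt nS); rewrite completionE // !inE pos_perm andbC.
by rewrite ncf_coef_setD1 // beta_last mul1r.
Qed.

Lemma ncf_coef_set0 : ncf_coef b0 beta A set0 = b0 + A 0%N * tail_sum beta A 0.
Proof.
rewrite /ncf_coef eqxx bitT mul1r /tail_sum mulr_sumr; congr (_ + _).
rewrite [RHS](eq_bigl predT) //; apply: eq_bigr => k _.
rewrite sub0set bitT mul1r mulrCA (bigD1 ord0) ?in_set0 //=.
congr (_ * (_ * _)); apply: eq_bigl => j; rewrite inE /= -val_eqE /=; have := ltn_ord j; lia.
Qed.

Definition ncf_poly (x : 'I_n -> bool) : R :=
  b0 + \sum_(k : 'I_n) beta k * \prod_(j : 'I_n | (j <= k)%N) (bit R (x (sigma j)) + A j).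

Lemma sum_subsets_prod_init_seg (k : 'I_n) T :
  \sum_(S : {set 'I_n} | S \subset T)
     bit R (S \subset init_seg k) * \prod_(j : 'I_n | (j <= k)%N && (sigma j \notin S)) A j
  = \prod_(j : 'I_n | (j <= k)%N) (bit R (sigma j \in T) + A j).
Proof.
have sub_imsetE (J : {set 'I_n}) :
    ([set sigma j | j in J] \subset T) && ([set sigma j | j in J] \subset init_seg k) =
    [forall j in J, (j <= k)%N && (sigma j \in T)].
  apply/andP/forall_inP => [[JT Jk] j jJ|JkT].
    have sjJ : sigma j \in [set sigma j | j in J] by apply: imset_f.
    by rewrite (subsetP JT _ sjJ) andbT -mem_init_seg (subsetP Jk _ sjJ).
  by split; apply/subsetP => _ /imsetP[j jJ ->]; have /andP[] := JkT j jJ;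
    rewrite ?mem_init_seg.
rewrite big_mkcond (reindex_inj (imset_inj (@perm_inj _ sigma))) /= [RHS]big_mkcond /=.
rewrite (eq_bigr (fun j : 'I_n => (if (j <= k)%N then bit R (sigma j \in T) else 0) +
     (if (j <= k)%N then A j else 1))) => [|j _]; last by case: ifP; rewrite ?addr0 ?add0r.
rewrite bigA_distr /=; apply: eq_bigr => J _.
rewrite [RHS](bigID (fun j : 'I_n => j \in J)) /=.
rewrite [X in _ = X * _](eq_bigr (fun j : 'I_n => bit R ((j <= k)%N && (sigma j \in T))));
  last by move=> j jJ; rewrite jJ; case: (j <= k)%N; rewrite ?bitF.
rewrite bit_prod -sub_imsetE.
rewrite [X in _ = _ * X](eq_bigr (fun j : 'I_n => if (j <= k)%N then A j else 1));
  last by move=> j /negbTE ->.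
rewrite -big_mkcondr /=; case: ifP => _; rewrite /= ?bitF ?mul0r //; congr (_ * _).
by apply: eq_bigl => j; rewrite (mem_imset _ _ (@perm_inj _ sigma)) andbC.
Qed.

Lemma sum_ncf_coef (x : 'I_n -> bool) :
  \sum_(S : {set 'I_n} | S \subset [set l | x l]) ncf_coef b0 beta A S = ncf_poly x.
Proof.
rewrite /ncf_coef big_split /=; congr (_ + _).
  rewrite (bigD1 set0) ?sub0set //= eqxx bitT mul1r big1 ?addr0 //.
  by move=> S /andP[_ /negbTE ->]; rewrite bitF mul0r.
rewrite exchange_big /=; apply: eq_bigr => k _.
rewrite -mulr_sumr sum_subsets_prod_init_seg; congr (_ * _).
by apply: eq_bigr => j _; rewrite inE.
Qed.

End Coefficients.

Lemma bpoly_eval_ncf_coefP c b0 beta A :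
  (forall S, bit R (c S) = ncf_coef b0 beta A S) <->
  (forall x, bit R (bpoly_eval c x) = ncf_poly b0 beta A x).
Proof.
split=> [coefE x | evalE].
  by rewrite (bit_bpoly_eval R2) -sum_ncf_coef; apply: eq_bigr => S _; rewrite coefE.
apply: eq_of_subset_sums => T; rewrite -(bit_bpoly_eval_set R2) evalE -sum_ncf_coef.
by rewrite (_ : [set l | l \in T] = T) //; apply/setP => l; rewrite inE.
Qed.

Lemma ncf_poly_first_hit b0 beta (a : nat -> bool) x (m : nat) :
  (forall j : 'I_n, (j < m)%N -> x (sigma j) != a j) ->
  ((m < n)%N -> x (sigma (inord m)) = a m) ->
  ncf_poly b0 beta (bit R \o a) x = b0 + \sum_(k : 'I_n | (k < m)%N) beta k.
Proof.
move=> miss hit; congr (_ + _); rewrite [RHS]big_mkcond; apply: eq_bigr => k _.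
have -> : \prod_(j : 'I_n | (j <= k)%N) (bit R (x (sigma j)) + (bit R \o a) j) =
          bit R (k < m)%N.
  under eq_bigr do rewrite /= -(bit_neqb R2).
  have [lt_km|le_mk] := ltnP k m.
    by rewrite big1 // => j le_jk; rewrite miss ?bitT //; apply: leq_ltn_trans lt_km.
  have lt_mn : (m < n)%N := leq_ltn_trans le_mk (ltn_ord k).
  by rewrite (bigD1 (inord m)) /= ?inordK // hit // eqxx bitF mul0r.
by case: (k < m)%N; rewrite ?bitT ?bitF ?mulr1 ?mulr0.
Qed.

(* Consecutive differences of the canalyzed values [b]; the last one is [1] because the
   default value is the negation of the last canalyzed value. *)
Definition canalyzing_beta (b : nat -> bool) (k : nat) : R :=
  if (k < n')%N then bit R (b k) + bit R (b k.+1) else 1.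

Lemma sum_canalyzing_beta (b : nat -> bool) m : (m <= n')%N ->
  \sum_(k < m) canalyzing_beta b k = bit R (b 0%N) + bit R (b m).
Proof.
move=> le_m; rewrite -(big_mkord xpredT).
rewrite (eq_big_nat _ _ (F2 := fun k => bit R (b k.+1) - bit R (b k))) => [|k /andP[_ lt_km]].
  by rewrite telescope_sumr // oppr_pchar2 // addrC.
by rewrite /canalyzing_beta ifT ?oppr_pchar2 1?addrC //; lia.
Qed.

Lemma ncf_poly_of_canalyzing (h : ('I_n -> bool) -> bool) (a b : 'I_n -> bool) :
  canalyzing_with sigma a b h -> forall x,
  bit R (h x) = ncf_poly (bit R (b (inord 0))) (canalyzing_beta (b \o inord))
                         (bit R \o (a \o inord)) x.
Proof.
move=> canal x; have [firstE lastE] := canal x.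
have [/existsP [j0 /eqP hit0]|] := boolP [exists j, x (sigma j) == a j].
  have exP : exists m, (m < n)%N && (x (sigma (inord m)) == a (inord m)).
    by exists j0; rewrite inord_val ltn_ord hit0 eqxx.
  have [m /andP[lt_mn /eqP hit] minm] := ex_minnP exP.
  have miss (j : 'I_n) : (j < m)%N -> x (sigma j) != (a \o inord) j.
    move=> lt_jm; apply: contraTneq lt_jm => /eqP hitj; rewrite -leqNgt minm //.
    by move: hitj; rewrite /= !inord_val ltn_ord => ->.
  rewrite (@ncf_poly_first_hit _ _ _ _ m miss) // -big_ord_widen ?sum_canalyzing_beta; try lia.
  rewrite /= addrA addrr_pchar2 // add0r (firstE (inord m)) ?inordK //= => k lt_km.
  by have := miss k lt_km; rewrite /= inord_val.
rewrite negb_exists => /forallP nohit.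
rewrite (@ncf_poly_first_hit _ _ _ _ n) => [|j _|]; last by rewrite ltnn.
  rewrite -(big_ord_widen _ _ (leqnn n)) big_ord_recr /= sum_canalyzing_beta //.
  rewrite /canalyzing_beta ltnn /= !addrA addrr_pchar2 // add0r addrC -(bit_negb R2).
  by rewrite (lastE nohit ord_max) //; congr (bit R (~~ b _)); apply/val_inj; rewrite /= inordK.
by rewrite /= inord_val; apply: nohit.
Qed.

Lemma in_Vsigma_ncf_coef c b0 beta A : beta n' = 1 ->
  (forall S, bit R (c S) = ncf_coef b0 beta A S) -> in_Vsigma sigma c.
Proof.
move=> beta_last coefE; apply/andP; split.
  by apply: (@bit_inj R); rewrite coefE ncf_coef_setT.
apply/forallP => S; apply/implyP => _; apply/eqP/(@bit_inj R).
rewrite /Vsigma_rhs bit_andb -bit_prod !coefE (ncf_coef_completion _ _ S beta_last).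
by congr (_ * _); apply: eq_bigr => k _; rewrite coefE.
Qed.

Lemma tail_sum_backward (beta A g : nat -> R) :
  g n' = beta n' -> (forall m, (m < n')%N -> g m = beta m + A m.+1 * g m.+1) ->
  forall m, (m <= n')%N -> tail_sum beta A m = g m.
Proof.
move=> g_last g_rec m le_m; rewrite -(subKn le_m).
elim: (n' - m)%N (leq_subr m n') => [|d IH] le_d.
  by rewrite subn0 tail_sum_last g_last.
have lt_d : (n' - d.+1 < n')%N by lia.
by rewrite tail_sum_rec // g_rec // -subSn // subSS (IH (ltnW le_d)).
Qed.

Lemma ncf_coef_of_in_Vsigma c : in_Vsigma sigma c ->
  exists (b0 : bool) (beta a : nat -> bool), beta n' /\
    forall S, bit R (c S) = ncf_coef (bit R b0) (bit R \o beta) (bit R \o a) S.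
Proof.
case/andP => cT /forallP c_rec.
pose a j := if (j < n')%N then c (setT :\ sigma (inord j)) else false.
pose beta k := if (k < n')%N then c (init_seg k) (+) (a k.+1 && c (init_seg k.+1)) else true.
pose b0 := c set0 (+) (a 0%N && c (init_seg 0)).
exists b0, beta, a; split; first by rewrite /beta ltnn.
have beta_last : (bit R \o beta) n' = 1 by rewrite /comp /beta ltnn.
have tailE : forall m, (m <= n')%N ->
    tail_sum (bit R \o beta) (bit R \o a) m = bit R (c (init_seg m)).
  apply: (@tail_sum_backward _ _ (fun m => bit R (c (init_seg m)))) => [|k lt_k].
    by rewrite beta_last init_seg_last cT.
  by rewrite /comp /beta lt_k (bit_addb R2) bit_andb -addrA addrr_pchar2 // addr0.
move=> S; have [->|nS] := eqVneq S set0.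
  by rewrite ncf_coef_set0 tailE // /b0 (bit_addb R2) bit_andb -addrA addrr_pchar2 // addr0.
have [->|nST] := eqVneq S setT; first by rewrite ncf_coef_setT ?cT.
have /eqP -> := implyP (c_rec S) nST.
rewrite /Vsigma_rhs bit_andb -bit_prod (ncf_coef_completion _ _ S beta_last).
congr (_ * _).
  by rewrite completionE // ncf_coef_init_seg ?last_pos_bound // tailE ?last_pos_bound.
apply: eq_bigr => k kS; have lt_k := completion_diff_lt nS kS.
by rewrite ncf_coef_setD1 // beta_last mul1r /comp /a lt_k inord_val.
Qed.

Lemma canalyzing_of_ncf_poly (h : ('I_n -> bool) -> bool) (b0 : bool) (beta a : nat -> bool) :
  beta n' ->
  (forall x, bit R (h x) = ncf_poly (bit R b0) (bit R \o beta) (bit R \o a) x) ->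
  canalyzing_with sigma (fun j => a j)
    (fun k => b0 (+) \big[addb/false]_(j : 'I_n | (j < k)%N) beta j) h.
Proof.
move=> beta_last hE x; split=> [k miss hit | nohit k k_last]; apply: (@bit_inj R).
  rewrite hE (ncf_poly_first_hit _ _ miss) => [|_]; last by rewrite inord_val.
  by rewrite (bit_addb R2) (bit_sum R2).
rewrite hE (ncf_poly_first_hit _ _ (m := n)) => [|j _|]; [|exact: nohit|by rewrite ltnn].
rewrite (bit_negb R2) (bit_addb R2) (bit_sum R2) (bigD1 ord_max) //= beta_last bitT.
rewrite (eq_bigl (fun j : 'I_n => (j < k)%N)) => [|j]; first by rewrite addrCA.
by rewrite -val_eqE /= k_last /=; have := ltn_ord j; lia.
Qed.

End NestedCanalyzing.

Lemma canalyzing_wrt_in_Vsigma n' (sigma : {perm 'I_n'.+1})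
    (c : {ffun {set 'I_n'.+1} -> bool}) :
  canalyzing_wrt sigma (bpoly_eval c) <-> in_Vsigma sigma c.
Proof.
have F2 : 2 \in [pchar 'F_2] by apply: pchar_Fp.
split=> [[a [b canal]] | inV].
  apply: (in_Vsigma_ncf_coef F2 (beta := canalyzing_beta _ n' (b \o inord))).
    by rewrite /canalyzing_beta ltnn.
  apply/(bpoly_eval_ncf_coefP F2 _ _ _ _ _) => x.
  exact: (ncf_poly_of_canalyzing F2 canal x).
have [b0 [beta [a [beta_last coefE]]]] := ncf_coef_of_in_Vsigma F2 inV.
do 2 eexists; apply: (canalyzing_of_ncf_poly F2 beta_last).
exact/(bpoly_eval_ncf_coefP F2 _ _ _ _ _).
Qed.

Lemma nested_canalyzing_in_Vsigma n' (c : {ffun {set 'I_n'.+1} -> bool}) :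
  nested_canalyzing (bpoly_eval c) <-> exists sigma, in_Vsigma sigma c.
Proof.
split=> [[_ [sigma ncf]] | [sigma inV]].
  by exists sigma; apply/canalyzing_wrt_in_Vsigma.
split; first by apply: (on_all_vars_bpoly (pchar_Fp (isT : prime 2))); case/andP: inV.
by exists sigma; apply/canalyzing_wrt_in_Vsigma.
Qed.

Section DataPolynomials.
Variable n : nat.
Local Notation R := (cring n).
Implicit Types (T : {set 'I_n}) (P : xring n).

Lemma cring_pchar2 : 2 \in [pchar R].
Proof. by apply: (rmorph_pchar (@mpolyC _ F2bar)); apply: F2bar_pchar2. Qed.

Definition setpt T : 'I_n -> R := fun e => bit R (e \in T).

(* At 0/1 points [x_e^k = x_e] for [k > 0], which is what the reduction modulo
   [x_e^2 - x_e] encodes. *)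
Lemma meval_red_coef P T :
  P.@[setpt T] = \sum_(S : {set 'I_n} | S \subset T) red_coef S P.
Proof.
rewrite mevalE /red_coef.
rewrite (eq_bigr (fun S => \sum_(m <- msupp P)
  if [set l | (m l != 0)%N] == S then P@_m else 0)) => [|S _]; last by rewrite big_mkcond.
rewrite exchange_big /=; apply: eq_bigr => m _.
under eq_bigr do rewrite bit_expr.
rewrite bit_prod.
have -> : [forall i, (m i != 0)%N ==> (i \in T)] = ([set l | (m l != 0)%N] \subset T).
  apply/forallP/subsetP => [mT l|mT l]; first by rewrite inE => /(implyP (mT l)).
  by apply/implyP => ml; apply: mT; rewrite inE.
have [msT|msT] := boolP ([set l | (m l != 0)%N] \subset T);
  rewrite ?bitT ?bitF ?mulr1 ?mulr0; last first.
  by rewrite big1 // => S sST; case: eqP => // eS; move: msT; rewrite eS sST.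
rewrite (bigD1 [set l | (m l != 0)%N]) //= eqxx big1 ?addr0 // => S /andP[_ /negbTE].
by rewrite eq_sym => ->.
Qed.

Lemma meval_delta (x : 'I_n -> bool) T :
  (delta x).@[setpt T] = bit R (T == [set e | x e]).
Proof.
rewrite /delta rmorph_prod /= (eq_bigr (fun e => bit R ((e \in T) == x e))) => [|e _].
  rewrite bit_prod; congr (bit R _); apply/forallP/eqP => [Tx|-> e]; last by rewrite inE eqxx.
  by apply/setP => e; rewrite inE (eqP (Tx e)).
by rewrite (bit_eqb cring_pchar2) rmorphB rmorph1 rmorphB /= mevalXU /bit rmorph_nat.
Qed.

Variables (r : nat) (s t : 'I_r -> 'I_n -> bool) (i : 'I_n).
Hypothesis s_inj : injective s.

Lemma data_set_inj : injective (fun j => [set e | s j e]).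
Proof.
move=> j1 j2 /setP e12; apply: s_inj; apply: functional_extensionality => e.
by have := e12 e; rewrite !inE.
Qed.

Lemma meval_interpolation_data (G : xring n) (j : 'I_r) :
  (f_data s t i + G * p_data s).@[setpt [set e | s j e]] = bit R (t j i).
Proof.
have delta_j k : (delta (s k)).@[setpt [set e | s j e]] = bit R (k == j).
  by rewrite meval_delta (inj_eq data_set_inj) eq_sym.
have p0 : (p_data s).@[setpt [set e | s j e]] = 0.
  by rewrite /p_data rmorph_prod (bigD1 j) // rmorphB rmorph1 /= delta_j eqxx subrr mul0r.
rewrite rmorphD rmorphM /= p0 mulr0 addr0 /f_data rmorph_sum (bigD1 j) // big1 => [|k kj].
  by rewrite rmorphM /= delta_j eqxx bitT mulr1 addr0 /bit rmorph_nat.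
by rewrite rmorphM /= delta_j (negbTE kj) bitF mulr0.
Qed.

Lemma meval_interpolation_off (G : xring n) T : (forall j, T != [set e | s j e]) ->
  (f_data s t i + G * p_data s).@[setpt T] = G.@[setpt T].
Proof.
move=> offT; rewrite rmorphD rmorphM /= /f_data /p_data rmorph_sum rmorph_prod big1 => [|j _].
  rewrite add0r big1 ?mulr1 // => j _.
  by rewrite rmorphB rmorph1 /= meval_delta (negbTE (offT j)) bitF subr0.
by rewrite rmorphM /= meval_delta (negbTE (offT j)) bitF mulr0.
Qed.

Lemma meval_generic_b T : (generic_b n).@[setpt T] = \sum_(H : {set 'I_n} | H \subset T) var H.
Proof.
rewrite /generic_b rmorph_sum [RHS]big_mkcond; apply: eq_bigr => H _.
rewrite rmorphM /= mevalC rmorph_prod /=.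
under eq_bigr do rewrite mevalXU.
rewrite bit_prod (_ : [forall (l | l \in H), l \in T] = (H \subset T));
  last exact/forall_inP/subsetP.
by case: ifP; rewrite ?bitT ?bitF ?mulr1 ?mulr0.
Qed.

End DataPolynomials.

Lemma meval_mmap n (g : 'I_(nsub n) -> cring n) (v : 'I_(nsub n) -> F2bar) (q : cring n) :
  (mmap (@mpolyC _ F2bar) g q).@[v] = q.@[fun k => (g k).@[v]].
Proof.
rewrite /mmap rmorph_sum mevalE; apply: eq_bigr => m _.
rewrite rmorphM /= mevalC /mmap1 rmorph_prod; congr (_ * _); apply: eq_bigr => k _.
by rewrite rmorphXn.
Qed.

Section Ideals.
Variable n : nat.
Implicit Types (c : {ffun {set 'I_n} -> bool}) (sigma : {perm 'I_n}).

Definition cpoint c : 'I_(nsub n) -> F2bar := fun k => bit F2bar (c (enum_val k)).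

Lemma meval_var c S : (var S).@[cpoint c] = bit F2bar (c S).
Proof. by rewrite /var mevalXU /cpoint enum_rankK. Qed.

Lemma meval_bit c b : (bit (cring n) b).@[cpoint c] = bit F2bar b.
Proof. exact: rmorph_nat. Qed.

Lemma meval_Isigma_gen sigma c S :
  (Isigma_gen sigma S).@[cpoint c] = bit F2bar (c S) - bit F2bar (Vsigma_rhs sigma c S).
Proof.
rewrite /Isigma_gen /Vsigma_rhs rmorphB rmorphM rmorph_prod /= !meval_var bit_andb -bit_prod.
by congr (_ - _ * _); apply: eq_bigr => k _; rewrite meval_var.
Qed.

Lemma meval_in_Isigma sigma c q : in_Vsigma sigma c -> in_Isigma sigma q -> q.@[cpoint c] = 0.
Proof.
case/andP => cT /forallP c_rec [coef ->].
rewrite rmorphD rmorphM rmorphB rmorph1 /= meval_var cT bitT subrr mulr0 add0r.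
rewrite rmorph_sum big1 // => S nST; rewrite rmorphM /= meval_Isigma_gen.
by rewrite (eqP (implyP (c_rec S) nST)) subrr mulr0.
Qed.

Lemma in_Isigma_mull sigma g q : in_Isigma sigma q -> in_Isigma sigma (g * q).
Proof.
case=> coef ->; exists (fun o => g * coef o).
by rewrite mulrDr mulr_sumr mulrA; congr (_ + _); apply: eq_bigr => S _; rewrite mulrA.
Qed.

Lemma in_Isigma_nonvanishing sigma c : ~~ in_Vsigma sigma c ->
  exists2 q, in_Isigma sigma q & q.@[cpoint c] != 0.
Proof.
rewrite negb_and => /orP [ncT | /forallPn [S]].
  exists (var setT - 1).
    exists (fun o => if o is None then 1 else 0).
    by rewrite mul1r big1 ?addr0 // => S _; rewrite mul0r.
  by rewrite rmorphB rmorph1 /= meval_var (negbTE ncT) bitF sub0r oppr_eq0 oner_eq0.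
rewrite negb_imply => /andP[nST c_neq].
exists (Isigma_gen sigma S).
  exists (fun o => if o is Some S' then (S' == S)%:R else 0).
  rewrite mul0r add0r (bigD1 S) //= eqxx mul1r big1 ?addr0 // => S' /andP[_ nS'].
  by rewrite (negbTE nS') mul0r.
by rewrite meval_Isigma_gen subr_eq0; apply: contra c_neq => /eqP/bit_inj ->.
Qed.

Lemma in_Vsigma_of_vanishing c : (forall q, in_IVncf q -> q.@[cpoint c] = 0) ->
  exists sigma, in_Vsigma sigma c.
Proof.
move=> vanish; have [/existsP //|] := boolP [exists sigma, in_Vsigma sigma c].
rewrite negb_exists => /forallP notV.
have /fin_all_exists2 [q in_q q_neq0] := fun sigma => in_Isigma_nonvanishing (notV sigma).
have in_prod : in_IVncf (\prod_sigma q sigma).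
  by move=> sigma; rewrite (bigD1 sigma) //= mulrC; apply: in_Isigma_mull.
exfalso; have /eqP := vanish _ in_prod; rewrite rmorph_prod /=; apply/negP/prodf_neq0 => sigma _.
exact: q_neq0.
Qed.

End Ideals.

Section Fitting.
Variables (n r : nat) (s t : 'I_r -> 'I_n -> bool) (i : 'I_n).
Hypothesis s_inj : injective s.
Implicit Types (c : {ffun {set 'I_n} -> bool}) (q : cring n).

Lemma Phi_var S : Phi s t i (var S) = W_poly s t i S.
Proof. by rewrite /Phi /var mmapX mmap1U enum_rankK. Qed.

Lemma sum_W_poly (T : {set 'I_n}) : \sum_(S : {set 'I_n} | S \subset T) W_poly s t i S =
  (f_data s t i + generic_b n * p_data s).@[setpt T].
Proof. by rewrite meval_red_coef. Qed.

(* [\sum_(S in 2^s_j) c_S - t_(j,i)] expresses [h(s_j) = t_(j,i)]. *)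
Lemma Phi_fit_constraint j :
  Phi s t i (\sum_(S : {set 'I_n} | S \subset [set e | s j e]) var S - bit _ (t j i)) = 0.
Proof.
rewrite /Phi rmorphB rmorph_sum /= (eq_bigr (W_poly s t i)) => [|S _]; last exact: Phi_var.
by rewrite sum_W_poly (meval_interpolation_data _ _ s_inj) /bit rmorph_nat subrr.
Qed.

Lemma in_J_IVncf q : in_IVncf q -> in_J s t i q.
Proof. by move=> qI; exists q, 0; rewrite addr0 /Phi raddf0. Qed.

Lemma in_J_kerPhi q : Phi s t i q = 0 -> in_J s t i q.
Proof.
move=> kerq; exists 0, q; rewrite add0r; split=> //; split=> // sigma.
by exists (fun=> 0); rewrite mul0r add0r big1 // => S _; rewrite mul0r.
Qed.

Lemma fit_of_point_in_V c : F2_point_in_V (in_J s t i) c ->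
  forall j, bpoly_eval c (s j) = t j i.
Proof.
move=> inV j; have := inV _ (in_J_kerPhi (Phi_fit_constraint j)).
rewrite rmorphB rmorph_sum /= meval_bit (eq_bigr (fun S => bit F2bar (c S))) => [|S _];
  last exact: meval_var.
by rewrite -(bit_bpoly_eval F2bar_pchar2) => /eqP; rewrite subr_eq0 => /eqP/bit_inj.
Qed.

(* Evaluating also [b_H] at [c_H], the interpolant [f_i + b p] becomes [h] itself. *)
Lemma meval_W_poly c : (forall j, bpoly_eval c (s j) = t j i) ->
  forall S, (W_poly s t i S).@[cpoint c] = bit F2bar (c S).
Proof.
move=> fit; apply: eq_of_subset_sums => T.
rewrite -rmorph_sum /= sum_W_poly.
have [/existsP [j /eqP ->]|] := boolP [exists j, T == [set e | s j e]].
  rewrite (meval_interpolation_data _ _ s_inj) meval_bit -(bit_bpoly_eval F2bar_pchar2).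
  by rewrite -fit; congr (bit _ _); apply: bpoly_eval_ext => e; rewrite inE.
rewrite negb_exists => /forallP offT; rewrite meval_interpolation_off // meval_generic_b.
by rewrite rmorph_sum; apply: eq_bigr => H _; apply: meval_var.
Qed.

Lemma meval_kerPhi c q : (forall j, bpoly_eval c (s j) = t j i) ->
  Phi s t i q = 0 -> q.@[cpoint c] = 0.
Proof.
move=> fit kerq; rewrite -(meval0 (cpoint c)) -kerq /Phi meval_mmap.
by apply: meval_eq => k; rewrite meval_W_poly.
Qed.

End Fitting.

Theorem mainTheorem2 (n r : nat) (s t : 'I_r -> 'I_n -> bool) (i : 'I_n) :
  (0 < n)%N -> (0 < r)%N -> injective s ->
  forall c : {ffun {set 'I_n} -> bool},
    F2_point_in_V (in_J s t i) c <->
    (nested_canalyzing (bpoly_eval c) /\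
     forall j : 'I_r, bpoly_eval c (s j) = t j i).
Proof.
case: n s t i => [//|n'] s t i _ _ s_inj c; split=> [inV | [ncf fit] q].
  split; last exact: (fit_of_point_in_V s_inj inV).
  apply/nested_canalyzing_in_Vsigma; apply: in_Vsigma_of_vanishing => q qI.
  exact: inV (in_J_IVncf _ _ _ qI).
move=> [q1 [q2 [-> [q1I kerq2]]]].
have [sigma inVs] := (nested_canalyzing_in_Vsigma c).1 ncf.
rewrite -/(cpoint c) rmorphD /= (meval_in_Isigma inVs (q1I sigma)) add0r.
exact: (meval_kerPhi s_inj fit kerq2).
Qed.
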